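(* Let $\mathfrak l$ be any Lagrangian subalgebra of $\mathfrak d$, regarded as a point of $\mathrm{Gr}(n,\mathfrak d)$. Then the Schouten bracket of $\Pi$ with itself vanishes at $\mathfrak l$: $[\Pi,\Pi](\mathfrak l)=0$.
   Context: Let $(\mathfrak u,\mathfrak u^* )$ be a finite-dimensional real Lie bialgebra, $n=\dim\mathfrak u$, and let $\mathfrak d=\mathfrak u\bowtie\mathfrak u^*$ be its double: the vector space $\mathfrak u\oplus\mathfrak u^*$ with the symmetric nondegenerate form $\langle x+\xi,y+\eta\rangle=(x,\eta)+(y,\xi)$ ($x,y\in\mathfrak u$, $\xi,\eta\in\mathfrak u^*$, $(\cdot,\cdot)$ the natural pairing), equipped with the unique Lie bracket for which $\langle\,,\rangle$ is ad-invariant and $\mathfrak u$, $\mathfrak u^*$ are subalgebras. A Lagrangian subalgebra of $\mathfrak d$ is a Lie subalgebra $\mathfrak l$ with $\dim\mathfrak l=n$ and $\langle a,b\rangle=0$ for all $a,b\in\mathfrak l$. $\mathrm{Gr}(n,\mathfrak d)$ is the Grassmannian of $n$-dimensional subspaces of $\mathfrak d$. Let $D$ be the adjoint group of $\mathfrak d$, acting on $\mathrm{Gr}(n,\mathfrak d)$, and let $\kappa:\mathfrak d\to\chi^1(\mathrm{Gr}(n,\mathfrak d))$ be the induced Lie algebra anti-homomorphism into vector fields, extended multilinearly to $\kappa:\wedge^k\mathfrak d\to\chi^k(\mathrm{Gr}(n,\mathfrak d))$. Identify $\mathfrak d^*\cong\mathfrak u^*\oplus\mathfrak u$ and define $R\in\wedge^2\mathfrak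 d$ by $R(\xi_1+x_1,\xi_2+x_2)=(\xi_2,x_1)-(\xi_1,x_2)$; equivalently $R=\sum_i\eta_i\wedge e_i$ for a basis $\{e_i\}$ of $\mathfrak u$ and dual basis $\{\eta_i\}$ of $\mathfrak u^*$. Define the bivector field $\Pi=\tfrac12\kappa(R)$ on $\mathrm{Gr}(n,\mathfrak d)$. *)

From HB Require Import structures.
From mathcomp Require Import all_boot all_order all_algebra.
From mathcomp Require Import all_classical all_reals all_analysis.
Set Implicit Arguments. Unset Strict Implicit. Unset Printing Implicit Defensive.
Import Order.TTheory GRing.Theory Num.Theory.
Import numFieldNormedType.Exports.
Local Open Scope ring_scope.

(* The double d = u ⊕ u^*, with u = R^n.  Elements of d are row vectors    *)
(* of size n+n: coordinates lshift n i are along the basis e_i of u,       *)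
(* coordinates rshift n i along the dual basis eta_i of u^*.               *)
(* A Lie bracket on d is given by structure constants C a b c :            *)
(*     [E_a, E_b] = \sum_c C a b c E_c.                                    *)

Section Double.
Variables (R : realType) (n : nat).
Local Notation m := (n + n)%N.
Local Notation vec := 'rV[R]_m.
Implicit Types (C : 'I_m -> 'I_m -> 'I_m -> R).

Definition e_u (i : 'I_n) : vec := delta_mx 0 (lshift n i).
Definition e_ustar (i : 'I_n) : vec := delta_mx 0 (rshift n i).

Definition dbr C (x y : vec) : vec :=
  \row_c \sum_a \sum_b x 0 a * y 0 b * C a b c.

Definition dform (x y : vec) : R :=
  \sum_i (x 0 (lshift n i) * y 0 (rshift n i)
          + x 0 (rshift n i) * y 0 (lshift n i)).

Definition is_lie_bracket C : Prop :=
  (forall a b c, C a b c = - C b a c) /\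
  (forall x y z : vec,
      dbr C x (dbr C y z) + dbr C y (dbr C z x) + dbr C z (dbr C x y) = 0).

Definition form_invariant C : Prop :=
  forall x y z : vec, dform (dbr C x y) z = dform x (dbr C y z).

Definition u_subalgebra C : Prop :=
  forall i j k : 'I_n, C (lshift n i) (lshift n j) (rshift n k) = 0.
Definition ustar_subalgebra C : Prop :=
  forall i j k : 'I_n, C (rshift n i) (rshift n j) (lshift n k) = 0.

(* d is the double of the Lie bialgebra (u, u^* ) (Manin triple). *)
Definition is_double_bracket C : Prop :=
  [/\ is_lie_bracket C, form_invariant C, u_subalgebra C & ustar_subalgebra C].

(* Lagrangian subalgebra, given by a basis: the n rows of L *)
Definition lagrangian_subalgebra C (L : 'M[R]_(n, m)) : Prop :=
  [/\ row_free L,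
      forall i j, dform (row i L) (row j L) = 0 &
      forall i j, (dbr C (row i L) (row j L) <= L)%MS].

(* matrix of ad_x acting on row vectors: y *m adm C x = [x, y] *)
Definition adm C (x : vec) : 'M[R]_m :=
  \matrix_(b, c) \sum_a x 0 a * C a b c.

(* Graph chart of Gr(n, d) around the point rowspace L, with complement
   rowspace K (col_mx L K invertible): the matrix A : 'M_n corresponds to
   the subspace spanned by the rows of L + A *m K, i.e. the graph of the
   linear map l -> c given by A.  Tangent vectors at A are matrices 'M_n. *)

(* kappa(x) in the chart: d/dt|_{t=0} exp(t ad_x) . W_A, where the rows of
   L + A K are moved to (L + A K) exp(t adm x); writing
   (L + A K) adm x = P L + Q K, the velocity in the chart is Q - P A. *)
Definition kappa C (L K : 'M[R]_(n, m)) (x : vec) (A : 'M[R]_n) : 'M[R]_n :=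
  let PQ := (L + A *m K) *m adm C x *m invmx (col_mx L K) in
  rsubmx PQ - lsubmx PQ *m A.

(* Pi = 1/2 kappa(R), R = \sum_i eta_i /\ e_i, with
   (V /\ W)^{pq} = V^p W^q - V^q W^p ; components are indexed by
   pairs p = (p.1, p.2) : 'I_n * 'I_n (the coordinate A p.1 p.2). *)
Definition Pi C (L K : 'M[R]_(n, m)) (A : 'M[R]_n) (p q : 'I_n * 'I_n) : R :=
  2^-1 * \sum_i (kappa C L K (e_ustar i) A p.1 p.2 * kappa C L K (e_u i) A q.1 q.2
               - kappa C L K (e_ustar i) A q.1 q.2 * kappa C L K (e_u i) A p.1 p.2).

End Double.

Definition schouten_self (R : realType) (k l : nat)
    (P : 'M[R]_(k, l) -> 'I_k * 'I_l -> 'I_k * 'I_l -> R)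
    (y : 'M[R]_(k, l)) (p q r : 'I_k * 'I_l) : R :=
  2 * \sum_(s : 'I_k * 'I_l)
    (P y s p * 'D_(delta_mx s.1 s.2) (fun z => P z q r) y
     + P y s q * 'D_(delta_mx s.1 s.2) (fun z => P z r p) y
     + P y s r * 'D_(delta_mx s.1 s.2) (fun z => P z p q) y).

(* In the graph chart A |-> rowspace (L + A K) of Gr(n, d) centred at l, the
   vector field kappa(x) is a Riccati field.  Its value at l is linear in x and
   is read off through the form from vectors m_p = [l_i, w_j] lying in l, while
   its derivative satisfies d kappa(x) . kappa(y) - d kappa(y) . kappa(x)
   = kappa([x, y]).  Hence [Pi, Pi](l) is, up to a factor, the cyclic sum
   <[rho m_r, rho m_p], m_q> + (cyclic), where rho is the contraction with R.
   Splitting vectors along d = u + u^*, this sum equals - <[m_r, m_p], m_q>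
   plus terms lying entirely in u or in u^*, which vanish because u and u^*
   are isotropic subalgebras; and <[m_r, m_p], m_q> = 0 because l is a
   Lagrangian subalgebra. *)

From HB Require Import structures.
From mathcomp Require Import all_boot all_order all_algebra.
From mathcomp Require Import all_classical all_reals all_analysis.
From mathcomp Require Import ring.
Set Implicit Arguments. Unset Strict Implicit. Unset Printing Implicit Defensive.
Import Order.TTheory GRing.Theory Num.Theory.
Local Open Scope ring_scope.

Section BracketAndForm.
Variables (R : realType) (n : nat) (C : 'I_(n + n) -> 'I_(n + n) -> 'I_(n + n) -> R).
Local Notation m := (n + n)%N.
Local Notation vec := 'rV[R]_m.
Implicit Types (x y z : vec).

Lemma dbrE x y : dbr C x y = y *m adm C x.
Proof.
apply/rowP => c; rewrite !mxE exchange_big /=; apply: eq_bigr => b _.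
by rewrite mxE big_distrr /=; apply: eq_bigr => a _; ring.
Qed.

Lemma admZD a x y : adm C (a *: x + y) = a *: adm C x + adm C y.
Proof.
apply/matrixP => b c; rewrite !mxE big_distrr -big_split /=.
by apply: eq_bigr => i _; rewrite !mxE; ring.
Qed.

Lemma admD x y : adm C (x + y) = adm C x + adm C y.
Proof. by rewrite -[in LHS](scale1r x) admZD scale1r. Qed.

Lemma admN x : adm C (- x) = - adm C x.
Proof.
by apply/matrixP => b c; rewrite !mxE -sumrN; apply: eq_bigr => a _; rewrite mxE; ring.
Qed.

Lemma dbrDl x y z : dbr C (x + y) z = dbr C x z + dbr C y z.
Proof. by rewrite !dbrE admD mulmxDr. Qed.

Lemma dbrDr x y z : dbr C x (y + z) = dbr C x y + dbr C x z.
Proof. by rewrite !dbrE mulmxDl. Qed.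

Lemma dbrNl x y : dbr C (- x) y = - dbr C x y.
Proof. by rewrite !dbrE admN mulmxN. Qed.

Lemma dbrNr x y : dbr C x (- y) = - dbr C x y.
Proof. by rewrite !dbrE mulNmx. Qed.

Definition form_mx : 'M[R]_m := block_mx 0 1%:M 1%:M 0.

Lemma form_mxK : form_mx *m form_mx = 1%:M.
Proof.
rewrite /form_mx mulmx_block !mulmx0 !mul0mx !mulmx1 !addr0 !add0r.
by rewrite (scalar_mx_block n n 1).
Qed.

Lemma form_mx_unit : form_mx \in unitmx.
Proof. by case: (mulmx1_unit form_mxK). Qed.

Lemma dformE x y : dform x y = (x *m form_mx *m y^T) 0 0.
Proof.
rewrite /dform /form_mx -[x]hsubmxK -[y]hsubmxK mul_row_block.
rewrite !mulmx0 !mulmx1 add0r addr0 tr_row_mx mul_row_col mxE big_split /= addrC !mxE.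
by congr (_ + _); apply: eq_bigr => i _; rewrite ?row_mxEl ?row_mxEr !mxE ?row_mxEl ?row_mxEr //; ring.
Qed.

Lemma dformC x y : dform x y = dform y x.
Proof. by apply: eq_bigr => i _; ring. Qed.

Lemma dformDl x y z : dform (x + y) z = dform x z + dform y z.
Proof. by rewrite !dformE !mulmxDl mxE. Qed.

Lemma dformDr x y z : dform x (y + z) = dform x y + dform x z.
Proof. by rewrite ![dform x _]dformC dformDl. Qed.

Lemma dformNl x y : dform (- x) y = - dform x y.
Proof. by rewrite !dformE !mulNmx mxE. Qed.

Lemma dformNr x y : dform x (- y) = - dform x y.
Proof. by rewrite ![dform x _]dformC dformNl. Qed.

End BracketAndForm.

Arguments form_mx {R n}.

Section LieAlgebra.
Variables (R : realType) (n : nat) (C : 'I_(n + n) -> 'I_(n + n) -> 'I_(n + n) -> R).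
Hypothesis hlie : is_lie_bracket C.
Implicit Types (x y z : 'rV[R]_(n + n)).

Lemma dbr_anticomm x y : dbr C x y = - dbr C y x.
Proof.
case: hlie => anti _; apply/rowP => c; rewrite !mxE exchange_big -sumrN.
by apply: eq_bigr => b _; rewrite -sumrN; apply: eq_bigr => a _; rewrite anti; ring.
Qed.

Lemma adm_dbr x y : adm C y *m adm C x - adm C x *m adm C y = adm C (dbr C x y).
Proof.
case: hlie => _ jacobi; apply/row_matrixP => i; rewrite !rowE.
set z := delta_mx 0 i; rewrite mulmxBr !mulmxA -!dbrE.
have := jacobi x y z.
rewrite [dbr C z x]dbr_anticomm dbrNr [dbr C z (dbr C x y)]dbr_anticomm => jacobi_xyz.
by apply/eqP; rewrite -subr_eq0 -jacobi_xyz.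
Qed.

End LieAlgebra.

Section ManinTriple.
Variables (R : realType) (n : nat).
Local Notation vec := 'rV[R]_(n + n).
Implicit Types (a b c x y z : vec).

Definition pu x : vec := row_mx (lsubmx x) 0.
Definition ps x : vec := row_mx 0 (rsubmx x).
(* The contraction of [R = \sum_i eta_i /\ e_i] with [x] through the form. *)
Definition rho x : vec := ps x - pu x.

Lemma pu_lshift x i : pu x 0 (lshift n i) = x 0 (lshift n i).
Proof. by rewrite /pu row_mxEl mxE. Qed.

Lemma pu_rshift x i : pu x 0 (rshift n i) = 0.
Proof. by rewrite /pu row_mxEr mxE. Qed.

Lemma ps_lshift x i : ps x 0 (lshift n i) = 0.
Proof. by rewrite /ps row_mxEl mxE. Qed.

Lemma ps_rshift x i : ps x 0 (rshift n i) = x 0 (rshift n i).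
Proof. by rewrite /ps row_mxEr mxE. Qed.

Lemma rho_lshift x i : rho x 0 (lshift n i) = - x 0 (lshift n i).
Proof. by rewrite /rho [LHS]mxE [X in _ + X]mxE ps_lshift pu_lshift sub0r. Qed.

Lemma rho_rshift x i : rho x 0 (rshift n i) = x 0 (rshift n i).
Proof. by rewrite /rho [LHS]mxE [X in _ + X]mxE ps_rshift pu_rshift subr0. Qed.

Lemma add_pu_ps x : pu x + ps x = x.
Proof. by rewrite /pu /ps add_row_mx addr0 add0r hsubmxK. Qed.

Lemma dform_pu x y : dform (pu x) (pu y) = 0.
Proof. by apply: big1 => i _; rewrite !pu_rshift mulr0 mul0r addr0. Qed.

Lemma dform_ps x y : dform (ps x) (ps y) = 0.
Proof. by apply: big1 => i _; rewrite !ps_lshift mulr0 mul0r addr0. Qed.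

Lemma dform_e_u i b : dform (e_u R i) b = b 0 (rshift n i).
Proof.
rewrite /dform (bigD1 i) //= big1 ?addr0 => [|j ji].
  by rewrite /e_u !mxE /= eq_lshift eqxx eq_rlshift /= mul1r mul0r addr0.
by rewrite /e_u !mxE /= eq_lshift (negbTE ji) eq_rlshift /= !mul0r addr0.
Qed.

Lemma dform_e_ustar i b : dform (e_ustar R i) b = b 0 (lshift n i).
Proof.
rewrite /dform (bigD1 i) //= big1 ?addr0 => [|j ji].
  by rewrite /e_ustar !mxE /= eq_rshift eqxx eq_lrshift /= mul1r mul0r add0r.
by rewrite /e_ustar !mxE /= eq_rshift (negbTE ji) eq_lrshift /= !mul0r addr0.
Qed.

Lemma rho_contract (phi : vec -> R) : scalar phi -> forall b,
  \sum_(i < n) (phi (e_ustar R i) * dform (e_u R i) b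
                - phi (e_u R i) * dform (e_ustar R i) b) = phi (rho b).
Proof.
move=> phi_lin b.
have phi0 : phi 0 = 0 by have := phi_lin (-1) 0 0; rewrite scaler0 addr0 mulN1r addNr.
have phiD x y : phi (x + y) = phi x + phi y by rewrite -[in LHS](scale1r x) phi_lin mul1r.
have phiZ (k : R) x : phi (k *: x) = k * phi x by rewrite -[k *: x]addr0 phi_lin phi0 addr0.
have phiN x : phi (- x) = - phi x by rewrite -scaleN1r phiZ mulN1r.
have rhoE : rho b = \sum_(i < n) (b 0 (rshift n i) *: e_ustar R i - b 0 (lshift n i) *: e_u R i).
  rewrite {1}[rho b]row_sum_delta big_split_ord /= sumrB addrC -sumrN.
  by congr (_ + _); apply: eq_bigr => i _; rewrite ?rho_rshift ?rho_lshift ?scaleNr.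
rewrite rhoE (big_morph phi phiD phi0); apply: eq_bigr => i _.
by rewrite phiD phiN !phiZ dform_e_u dform_e_ustar; ring.
Qed.

Variable C : 'I_(n + n) -> 'I_(n + n) -> 'I_(n + n) -> R.
Hypotheses (hinv : form_invariant C) (hu : u_subalgebra C) (hs : ustar_subalgebra C).

Lemma dform_dbr_cycle x y z : dform (dbr C x y) z = dform (dbr C y z) x.
Proof. by rewrite hinv dformC. Qed.

Lemma dbr_pu a b : dbr C (pu a) (pu b) = pu (dbr C (pu a) (pu b)).
Proof.
rewrite [RHS]/pu -[LHS]hsubmxK; congr row_mx.
apply/rowP => k; rewrite !mxE; apply: big1 => i _; apply: big1 => j _.
case: (split_ordP i) => i' ->; last by rewrite pu_rshift !mul0r.
case: (split_ordP j) => j' ->; last by rewrite pu_rshift mulr0 mul0r.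
by rewrite hu mulr0.
Qed.

Lemma dbr_ps a b : dbr C (ps a) (ps b) = ps (dbr C (ps a) (ps b)).
Proof.
rewrite [RHS]/ps -[LHS]hsubmxK; congr row_mx.
apply/rowP => k; rewrite !mxE; apply: big1 => i _; apply: big1 => j _.
case: (split_ordP i) => i' ->; first by rewrite ps_lshift !mul0r.
case: (split_ordP j) => j' ->; first by rewrite ps_lshift mulr0 mul0r.
by rewrite hs mulr0.
Qed.

Lemma dform_dbr_pu a b c : dform (dbr C (pu a) (pu b)) (pu c) = 0.
Proof. by rewrite dbr_pu dform_pu. Qed.

Lemma dform_dbr_ps a b c : dform (dbr C (ps a) (ps b)) (ps c) = 0.
Proof. by rewrite dbr_ps dform_ps. Qed.

Lemma dform_dbr_rho a b c :
  dform (dbr C (rho a) (rho b)) c + dform (dbr C (rho b) (rho c)) a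
  + dform (dbr C (rho c) (rho a)) b = - dform (dbr C a b) c.
Proof.
(* With a = a1 + a2 along d = u + u^* we have rho a = a2 - a1; expanded, the
   two sides differ by 4 <[a1, b1], c1> + 4 <[a2, b2], c2>. *)
have polarize a1 a2 b1 b2 c1 c2 :
    dform (dbr C a1 b1) c1 = 0 -> dform (dbr C a2 b2) c2 = 0 ->
    dform (dbr C (a2 - a1) (b2 - b1)) (c1 + c2)
    + dform (dbr C (a1 + a2) (b2 - b1)) (c2 - c1)
    + dform (dbr C (a2 - a1) (b1 + b2)) (c2 - c1)
    = - dform (dbr C (a1 + a2) (b1 + b2)) (c1 + c2).
  move=> h1 h2.
  rewrite !(dbrDl, dbrDr, dbrNl, dbrNr, dformDl, dformDr, dformNl, dformNr) h1 h2.
  ring.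
rewrite -(dform_dbr_cycle a) (dform_dbr_cycle (rho c)).
have := polarize _ _ _ _ _ _ (dform_dbr_pu a b c) (dform_dbr_ps a b c).
by rewrite !add_pu_ps.
Qed.

End ManinTriple.

Lemma derive_along_poly (R : realType) (V : normedModType R) (f : V -> R)
    (x v : V) (p : {poly R}) :
  (forall t, f (t *: v + x) = p.[t]) -> 'D_v f x = p`_1.
Proof.
move=> fp; rewrite /derive.
have -> : (fun h : R => h^-1 *: ((f \o shift x) (h *: v) - f x))
    = (fun h : R => h^-1 *: (p.[h + 0] - p.[0])).
  by apply: funext => h /=; rewrite -!fp addr0 scale0r add0r.
by rewrite -/(derive1 (horner p) 0) derive1E derive_val horner_coef0 coef_deriv mulr1n.
Qed.

Section Chart.
Variables (R : realType) (n : nat) (C : 'I_(n + n) -> 'I_(n + n) -> 'I_(n + n) -> R).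
Variables (L K : 'M[R]_(n, n + n)).
Hypothesis hK : col_mx L K \in unitmx.
Local Notation m := (n + n)%N.
Local Notation vec := 'rV[R]_m.
Implicit Types (x y : vec) (A E : 'M[R]_n).

Definition adm_chart x : 'M[R]_m := col_mx L K *m adm C x *m invmx (col_mx L K).

Lemma adm_chartZD a x y : adm_chart (a *: x + y) = a *: adm_chart x + adm_chart y.
Proof. by rewrite /adm_chart admZD mulmxDr mulmxDl -scalemxAr -scalemxAl. Qed.

Lemma adm_chart_dbr : is_lie_bracket C -> forall x y,
  adm_chart y *m adm_chart x - adm_chart x *m adm_chart y = adm_chart (dbr C x y).
Proof.
move=> hlie x y; rewrite /adm_chart -(adm_dbr hlie) mulmxBr mulmxBl.
by rewrite !mulmxA !(mulmxKV hK).
Qed.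

Definition kappa0 x : 'M[R]_n := ursubmx (adm_chart x).
Definition dkappa x E : 'M[R]_n := E *m drsubmx (adm_chart x) - ulsubmx (adm_chart x) *m E.

Lemma kappaE x A :
  kappa C L K x A = kappa0 x + dkappa x A - A *m dlsubmx (adm_chart x) *m A.
Proof.
rewrite /kappa /=.
have -> : (L + A *m K) *m adm C x *m invmx (col_mx L K) = row_mx 1%:M A *m adm_chart x.
  by rewrite /adm_chart !mulmxA mul_row_col mul1mx.
rewrite -[in LHS](submxK (adm_chart x)) mul_row_block !mul1mx row_mxKr row_mxKl.
by rewrite mulmxDl /kappa0 /dkappa opprD !addrA.
Qed.

Lemma dkappa_comm : is_lie_bracket C -> forall x y,
  dkappa x (kappa0 y) - dkappa y (kappa0 x) = kappa0 (dbr C x y).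
Proof.
move=> hlie x y; rewrite /kappa0 -(adm_chart_dbr hlie) /dkappa.
rewrite -[adm_chart x]submxK -[adm_chart y]submxK !mulmx_block opp_block_mx add_block_mx.
rewrite !block_mxKur !block_mxKul !block_mxKdr.
set a := ursubmx _ *m drsubmx _; set b := ulsubmx _ *m ursubmx _.
set c := ursubmx _ *m drsubmx _; set d := ulsubmx _ *m ursubmx _.
by clearbody a b c d; apply/matrixP => i j; rewrite !mxE; ring.
Qed.

Lemma dkappa_sum_delta x E i j :
  \sum_(s : 'I_n * 'I_n) E s.1 s.2 * dkappa x (delta_mx s.1 s.2) i j = dkappa x E i j.
Proof.
rewrite {2}[E]matrix_sum_delta /dkappa mulmx_suml mulmx_sumr -sumrB summxE.
rewrite -(pair_big xpredT xpredT (fun a b => E a b * dkappa x (delta_mx a b) i j)) /=.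
apply: eq_bigr => a _; rewrite mulmx_suml mulmx_sumr -sumrB summxE.
by apply: eq_bigr => b _; rewrite -scalemxAl -scalemxAr -scalerBr [RHS]mxE.
Qed.

Lemma kappa0_scalar i j : scalar (fun x => kappa0 x i j).
Proof. by move=> a x y /=; rewrite /kappa0 adm_chartZD !mxE. Qed.

Lemma dkappa_scalar E i j : scalar (fun x => dkappa x E i j).
Proof.
move=> a x y /=; rewrite /dkappa adm_chartZD /ulsubmx /drsubmx !linearP /=.
by rewrite mulmxDl -scalemxAl !mxE; ring.
Qed.

Definition kappa_poly x E i j : {poly R} :=
  (kappa0 x i j)%:P + dkappa x E i j *: 'X - (E *m dlsubmx (adm_chart x) *m E) i j *: 'X^2.

Lemma kappa_line x E t : kappa C L K x (t *: E)
  = kappa0 x + t *: dkappa x E - t ^+ 2 *: (E *m dlsubmx (adm_chart x) *m E).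
Proof. by rewrite kappaE /dkappa -!scalemxAl -!scalemxAr scalerBr scalerA -expr2. Qed.

Lemma kappa_polyE x E i j t : (kappa_poly x E i j).[t] = kappa C L K x (t *: E) i j.
Proof.
rewrite kappa_line /kappa_poly !hornerD hornerN !hornerZ hornerC hornerX hornerXn.
by rewrite !mxE; ring.
Qed.

Lemma kappa_poly_coef0 x E i j : (kappa_poly x E i j)`_0 = kappa0 x i j.
Proof. by rewrite !coefE /=; ring. Qed.

Lemma kappa_poly_coef1 x E i j : (kappa_poly x E i j)`_1 = dkappa x E i j.
Proof. by rewrite !coefE /=; ring. Qed.

Lemma kappa_at0 x : kappa C L K x 0 = kappa0 x.
Proof. by rewrite kappaE /dkappa !mul0mx !mulmx0 !subr0 addr0. Qed.

Definition Pi_poly E p q : {poly R} :=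
  2^-1 *: \sum_i (kappa_poly (e_ustar R i) E p.1 p.2 * kappa_poly (e_u R i) E q.1 q.2
                 - kappa_poly (e_ustar R i) E q.1 q.2 * kappa_poly (e_u R i) E p.1 p.2).

Lemma Pi_polyE E p q t : (Pi_poly E p q).[t] = Pi C L K (t *: E) p q.
Proof.
rewrite /Pi_poly /Pi hornerZ horner_sum; congr (_ * _); apply: eq_bigr => i _.
by rewrite hornerD hornerN !hornerM !kappa_polyE.
Qed.

Lemma derive_Pi E p q : 'D_E (fun A => Pi C L K A p q) 0 = 2^-1 * \sum_i
  (dkappa (e_ustar R i) E p.1 p.2 * kappa0 (e_u R i) q.1 q.2
   + kappa0 (e_ustar R i) p.1 p.2 * dkappa (e_u R i) E q.1 q.2
   - (dkappa (e_ustar R i) E q.1 q.2 * kappa0 (e_u R i) p.1 p.2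
      + kappa0 (e_ustar R i) q.1 q.2 * dkappa (e_u R i) E p.1 p.2)).
Proof.
rewrite (@derive_along_poly _ _ _ _ _ (Pi_poly E p q)) => [|t]; last by rewrite addr0 Pi_polyE.
rewrite /Pi_poly coefZ coef_sum; congr (_ * _); apply: eq_bigr => i _.
rewrite coefB !coefM !big_ord_recl !big_ord0 /= /bump /= !addr0.
by rewrite !kappa_poly_coef0 !kappa_poly_coef1; ring.
Qed.

End Chart.

Section BasePoint.
Variables (R : realType) (n : nat) (C : 'I_(n + n) -> 'I_(n + n) -> 'I_(n + n) -> R).
Variables (L K : 'M[R]_(n, n + n)).
Hypothesis hK : col_mx L K \in unitmx.
Local Notation vec := 'rV[R]_(n + n).
Variable w : 'I_n * 'I_n -> vec.
Hypothesis kappa0_w : forall x p, kappa0 C L K x p.1 p.2 = dform x (w p).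

Lemma kappa0_rho b i j : \sum_k (kappa0 C L K (e_ustar R k) i j * dform (e_u R k) b
    - kappa0 C L K (e_u R k) i j * dform (e_ustar R k) b) = kappa0 C L K (rho b) i j.
Proof. exact: (rho_contract (kappa0_scalar C L K i j)). Qed.

Lemma dkappa_rho b E i j : \sum_k (dkappa C L K (e_ustar R k) E i j * dform (e_u R k) b
    - dkappa C L K (e_u R k) E i j * dform (e_ustar R k) b) = dkappa C L K (rho b) E i j.
Proof. exact: (rho_contract (dkappa_scalar C L K E i j)). Qed.

Lemma Pi_at0 p q : Pi C L K 0 p q = 2^-1 * kappa0 C L K (rho (w q)) p.1 p.2.
Proof.
rewrite -kappa0_rho /Pi; congr (_ * _).
by apply: eq_bigr => i _; rewrite !kappa_at0 !kappa0_w; ring.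
Qed.

Lemma derive_Pi_at0 E p q : 'D_E (fun A => Pi C L K A p q) 0
  = 2^-1 * (dkappa C L K (rho (w q)) E p.1 p.2 - dkappa C L K (rho (w p)) E q.1 q.2).
Proof.
rewrite -[X in _ * (X - _)](dkappa_rho (w q)) -[X in _ * (_ - X)](dkappa_rho (w p)).
rewrite derive_Pi -sumrB; congr (_ * _).
by apply: eq_bigr => i _; rewrite !kappa0_w; ring.
Qed.

Lemma schouten_Pi_at0 : is_lie_bracket C -> forall p q r,
  schouten_self (Pi C L K) 0 p q r = 2^-1 *
  (dform (dbr C (rho (w r)) (rho (w p))) (w q)
   + dform (dbr C (rho (w p)) (rho (w q))) (w r)
   + dform (dbr C (rho (w q)) (rho (w r))) (w p)).
Proof.
move=> hlie p q r.
have contract a y z (s1 s2 : 'I_n * 'I_n) :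
    \sum_(s : 'I_n * 'I_n) (2^-1 * kappa0 C L K a s.1 s.2)
      * (2^-1 * (dkappa C L K y (delta_mx s.1 s.2) s1.1 s1.2
                 - dkappa C L K z (delta_mx s.1 s.2) s2.1 s2.2))
    = 2^-1 * 2^-1 * (dkappa C L K y (kappa0 C L K a) s1.1 s1.2
                     - dkappa C L K z (kappa0 C L K a) s2.1 s2.2).
  rewrite -(dkappa_sum_delta _ _ _ y) -(dkappa_sum_delta _ _ _ z) -sumrB mulr_sumr.
  by apply: eq_bigr => s _; ring.
(* The six second-order terms pair up through [dkappa_comm]. *)
have comm a b (s : 'I_n * 'I_n) : dform (dbr C a b) (w s)
    = dkappa C L K a (kappa0 C L K b) s.1 s.2 - dkappa C L K b (kappa0 C L K a) s.1 s.2.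
  by rewrite -kappa0_w -(dkappa_comm hK hlie) [LHS]mxE [in X in _ + X]mxE.
rewrite /schouten_self.
under eq_bigr => s _ do rewrite !derive_Pi_at0 !Pi_at0.
rewrite !big_split /= !contract !comm.
have arith (a1 a2 a3 a4 a5 a6 : R) :
    2 * (2^-1 / 2 * (a1 - a2) + 2^-1 / 2 * (a3 - a4) + 2^-1 / 2 * (a5 - a6))
    = 2^-1 * (a1 - a6 + (a3 - a2) + (a5 - a4)) by field.
exact: arith.
Qed.

End BasePoint.

Lemma mul_trmx_entry (R : ringType) p q r (Z : 'M[R]_(p, q)) (W : 'M[R]_(r, q)) i j :
  (Z *m W^T) i j = (row i Z *m (row j W)^T) 0 0.
Proof. by rewrite !mxE; apply: eq_bigr => k _; rewrite !mxE. Qed.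

Section Lagrangian.
Variables (R : realType) (n : nat) (C : 'I_(n + n) -> 'I_(n + n) -> 'I_(n + n) -> R).
Variables (L K : 'M[R]_(n, n + n)).
Hypotheses (hC : is_double_bracket C) (hL : lagrangian_subalgebra C L).
Hypothesis hK : col_mx L K \in unitmx.
Local Notation vec := 'rV[R]_(n + n).
Implicit Types (a b x y : vec).

Lemma form_mx_isotropic : L *m form_mx *m L^T = 0.
Proof.
case: hL => _ iso _; apply/matrixP => i j.
by rewrite mul_trmx_entry row_mul -dformE iso mxE.
Qed.

Lemma dform_sub a b : (a <= L)%MS -> (b <= L)%MS -> dform a b = 0.
Proof.
move=> /submxP[u ->] /submxP[v ->]; rewrite dformE trmx_mul !mulmxA.
have -> : u *m L *m form_mx *m L^T = u *m (L *m form_mx *m L^T) by rewrite !mulmxA.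
by rewrite form_mx_isotropic mulmx0 mul0mx mxE.
Qed.

Lemma dbr_sub a b : (a <= L)%MS -> (b <= L)%MS -> (dbr C a b <= L)%MS.
Proof.
case: hL => _ _ closed; case: hC => hlie _ _ _.
have row_sub k c : (c <= L)%MS -> (dbr C (row k L) c <= L)%MS.
  case/submxP => v ->; rewrite dbrE -mulmxA; apply: submx_trans (submxMl _ _) _.
  by apply/row_subP => j; rewrite row_mul -dbrE closed.
move=> ha /submxP[v ->]; rewrite dbrE -mulmxA; apply: submx_trans (submxMl _ _) _.
by apply/row_subP => k; rewrite row_mul -dbrE (dbr_anticomm hlie) eqmx_opp row_sub.
Qed.

Definition gram_KL : 'M[R]_n := K *m form_mx *m L^T.

Lemma gram_col_mx : col_mx L K *m form_mx *m L^T = col_mx 0 gram_KL.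
Proof. by rewrite !mul_col_mx form_mx_isotropic. Qed.

Lemma gram_KL_unit : gram_KL \in unitmx.
Proof.
case: hL => free _ _.
rewrite -row_free_unit /row_free -(rank_col_0mx n) -gram_col_mx.
rewrite -mxrank_tr trmx_mul trmxK mxrankMfree //.
by rewrite row_free_unit unitmx_tr unitmx_mul hK form_mx_unit.
Qed.

(* The basis of [L] dual to the rows of [K] under the form. *)
Definition Ldual : 'M[R]_(n, n + n) := (invmx gram_KL)^T *m L.

Lemma form_mx_Ldual : form_mx *m Ldual^T = rsubmx (invmx (col_mx L K)).
Proof.
apply: (can_inj (mulKmx hK)); rewrite mulmx_rsub mulmxV //.
rewrite (scalar_mx_block n n 1) block_mxEh row_mxKr.
by rewrite /Ldual trmx_mul trmxK !mulmxA gram_col_mx mul_col_mx mul0mx mulmxV ?gram_KL_unit.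
Qed.

Lemma dform_Ldual y j : dform y (row j Ldual) = (y *m invmx (col_mx L K)) 0 (rshift n j).
Proof.
rewrite dformE -[y *m form_mx](row_id 0) -mul_trmx_entry -mulmxA form_mx_Ldual.
by rewrite mulmx_rsub mxE.
Qed.

Definition kappa0_rep (p : 'I_n * 'I_n) : vec := dbr C (row p.1 L) (row p.2 Ldual).

Lemma kappa0_rep_sub p : (kappa0_rep p <= L)%MS.
Proof. by apply: dbr_sub; rewrite ?row_sub // /Ldual row_mul submxMl. Qed.

Lemma kappa0_dform x p : kappa0 C L K x p.1 p.2 = dform x (kappa0_rep p).
Proof.
case: hC => _ hinv _ _.
rewrite /kappa0 /adm_chart !mul_col_mx /ursubmx col_mxKu mxE.
have entry_row (M : 'M[R]_(n, n + n)) k : M p.1 k = row p.1 M 0 k by rewrite mxE.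
by rewrite entry_row !row_mul -dbrE -dform_Ldual hinv.
Qed.

End Lagrangian.

Theorem theorem2p14 (R : realType) (n : nat)
    (C : 'I_(n + n) -> 'I_(n + n) -> 'I_(n + n) -> R)
    (hC : is_double_bracket C)
    (L : 'M[R]_(n, n + n)) (hL : lagrangian_subalgebra C L)
    (K : 'M[R]_(n, n + n)) (hK : col_mx L K \in unitmx) :
  forall p q r : 'I_n * 'I_n, schouten_self (Pi C L K) 0 p q r = 0.
Proof.
move=> p q r; have [hlie hinv hu hs] := hC.
rewrite (schouten_Pi_at0 hK (kappa0_dform hC hL hK) hlie) (dform_dbr_rho hinv hu hs).
have rep_sub := kappa0_rep_sub K hC hL.
by rewrite (dform_sub hL (dbr_sub hC hL (rep_sub r) (rep_sub p)) (rep_sub q)) oppr0 mulr0.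
Qed.
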